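(* Let $0<\bar C\le1$, $\epsilon>0$, $\omega\ge0$, $\gamma_0\ge\gamma\ge0$. Let $\omega(t),\epsilon_x(t),\epsilon_y(t),\delta\gamma_t$ be real-valued functions of time with $|\omega(t)|\le\omega$, $\sqrt{\epsilon_x^2(t)+\epsilon_y^2(t)}\le\epsilon$, $|\delta\gamma_t|\le\gamma$, and set $H(t)=[1+\omega(t)]I_z+\epsilon_x(t)I_x+\epsilon_y(t)I_y$, $\gamma_t=\gamma_0+\delta\gamma_t$. Let the qubit density matrix $\rho_t$ evolve according to $$\dot\rho_t=-i[H(t),\rho_t]+\gamma_t(\sigma_z\rho_t\sigma_z-\rho_t)$$ from an initial state $\rho_0$ with $C_0=[\mathrm{tr}(\rho_0\sigma_x)]^2+[\mathrm{tr}(\rho_0\sigma_y)]^2=1$. Define $$T_p=\begin{cases}\dfrac{1-\bar C}{4\sqrt2(\gamma_0+\gamma)}, & \text{if } 4(\gamma_0+\gamma)^2\ge\epsilon^2,\\[2mm] \dfrac{(1-\bar C)\sqrt{\epsilon^2-2(\gamma_0+\gamma)^2}}{2\epsilon^2}, & \text{if } 4(\gamma_0+\gamma)^2<\epsilon^2.\end{cases}$$ Then for every $t\in[0,T_p]$, $\rho_t\in\mathcal{D}_p=\{\rho:[\mathrm{tr}(\rho\sigma_x)]^2+[\mathrm{tr}(\rho\sigma_y)]^2\ge\bar C\}$. Consequently, if projective measurements of $\sigma_x$ are performed periodically with period $T_p$, the state remains in $\mathcal{D}_p$.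
   Context: $\sigma_x,\sigma_y,\sigma_z$ are the Pauli matrices $\begin{pmatrix}0&1\\1&0\end{pmatrix},\begin{pmatrix}0&-i\\i&0\end{pmatrix},\begin{pmatrix}1&0\\0&-1\end{pmatrix}$, $I_j=\frac12\sigma_j$, $[A,B]=AB-BA$, units with $\hbar=1$. The coherence of a qubit state $\rho$ is $C=x^2+y^2$ with $x=\mathrm{tr}(\rho\sigma_x)$, $y=\mathrm{tr}(\rho\sigma_y)$. *)

From Stdlib Require Import Reals.
From Coquelicot Require Import Coquelicot.
Open Scope R_scope.

(* 2x2 complex matrices; index false = first basis vector |0>,
   true = second basis vector |1> (sigma_z |0> = |0>). *)
Definition M2 := bool -> bool -> C.

Definition mmul (A B : M2) : M2 :=
  fun i j => Cplus (Cmult (A i false) (B false j)) (Cmult (A i true) (B true j)).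
Definition madd (A B : M2) : M2 := fun i j => Cplus (A i j) (B i j).
Definition msub (A B : M2) : M2 := fun i j => Cminus (A i j) (B i j).
Definition mscal (c : C) (A : M2) : M2 := fun i j => Cmult c (A i j).
Definition mtr (A : M2) : C := Cplus (A false false) (A true true).
Definition comm (A B : M2) : M2 := msub (mmul A B) (mmul B A).

Definition Ci : C := (0, 1).

Definition sigma_x : M2 := fun i j => if Bool.eqb i j then RtoC 0 else RtoC 1.
Definition sigma_y : M2 := fun i j =>
  match i, j with
  | false, true => Copp Ci
  | true, false => Ci
  | _, _ => RtoC 0
  end.
Definition sigma_z : M2 := fun i j =>
  match i, j with
  | false, false => RtoC 1
  | true, true => RtoC (-1)
  | _, _ => RtoC 0
  end.

Definition Ix : M2 := mscal (RtoC (1/2)) sigma_x.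
Definition Iy : M2 := mscal (RtoC (1/2)) sigma_y.
Definition Iz : M2 := mscal (RtoC (1/2)) sigma_z.

(* Bloch coordinates x = tr(rho sigma_x), y = tr(rho sigma_y)
   (real for Hermitian rho; we take the real part). *)
Definition bx (rho : M2) : R := Re (mtr (mmul rho sigma_x)).
Definition by_ (rho : M2) : R := Re (mtr (mmul rho sigma_y)).

Definition coherence (rho : M2) : R := (bx rho)^2 + (by_ rho)^2.

Definition is_density (rho : M2) : Prop :=
  (forall i j, rho j i = Cconj (rho i j)) /\
  (forall v : bool -> C,
      0 <= Re (Cplus
                (Cplus (Cmult (Cconj (v false)) (Cmult (rho false false) (v false)))
                       (Cmult (Cconj (v false)) (Cmult (rho false true) (v true))))
                (Cplus (Cmult (Cconj (v true)) (Cmult (rho true false) (v false)))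
                       (Cmult (Cconj (v true)) (Cmult (rho true true) (v true)))))) /\
  mtr rho = RtoC 1.

Definition in_Dp (Cbar : R) (rho : M2) : Prop := Cbar <= coherence rho.

Definition Ham (w ex ey : R -> R) (t : R) : M2 :=
  madd (madd (mscal (RtoC (1 + w t)) Iz) (mscal (RtoC (ex t)) Ix))
       (mscal (RtoC (ey t)) Iy).

Definition lindblad_rhs (H : M2) (g : R) (rho : M2) : M2 :=
  madd (mscal (Copp Ci) (comm H rho))
       (mscal (RtoC g) (msub (mmul (mmul sigma_z rho) sigma_z) rho)).

Definition Tp (Cbar eps g0 g : R) : R :=
  if Rle_dec (eps ^ 2) (4 * (g0 + g) ^ 2)
  then (1 - Cbar) / (4 * sqrt 2 * (g0 + g))
  else (1 - Cbar) * sqrt (eps ^ 2 - 2 * (g0 + g) ^ 2) / (2 * eps ^ 2).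

From Stdlib Require Import Reals Lra Psatz.
From Coquelicot Require Import Coquelicot.
Open Scope R_scope.

(* In Bloch coordinates the master equation reads
     x' = e_y z - (1 + w) y - 2 gamma x,   y' = (1 + w) x - e_x z - 2 gamma y,   z' = e_x y - e_y x.
   Hence x^2 + y^2 + z^2 has derivative -4 gamma (x^2 + y^2) <= 0 and the state stays in the
   unit Bloch ball. On that ball the derivative 2 z (e_y x - e_x y) - 4 gamma (x^2 + y^2) of the
   coherence is bounded below by -(2 G + sqrt (eps^2 + 4 G^2)), G = gamma0 + gamma, the largest
   eigenvalue of a 2x2 quadratic form; so C(t) >= 1 - (2 G + sqrt (eps^2 + 4 G^2)) t, and T_p is
   small enough for this to stay above Cbar. *)

Lemma is_derive_Re (f : R -> C) (t : R) (v : C) :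
  is_derive f t v -> is_derive (fun s => Re (f s)) t (Re v).
Proof.
  intros Hf; apply (filterdiff_comp' f Re t _ Re Hf), filterdiff_linear.
  exact (is_linear_fst (U := R_NormedModule) (V := R_NormedModule)).
Qed.

Lemma is_derive_Im (f : R -> C) (t : R) (v : C) :
  is_derive f t v -> is_derive (fun s => Im (f s)) t (Im v).
Proof.
  intros Hf; apply (filterdiff_comp' f Im t _ Im Hf), filterdiff_linear.
  exact (is_linear_snd (U := R_NormedModule) (V := R_NormedModule)).
Qed.

Lemma is_derive_sqr (f : R -> R) (t l : R) :
  is_derive f t l -> is_derive (fun s => f s ^ 2) t (2 * f t * l).
Proof.
  intros Hf; replace (2 * f t * l) with (INR 2 * l * f t ^ Nat.pred 2) by (simpl; ring).
  exact (is_derive_pow f 2 t l Hf).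
Qed.

Section Limits.
Context {T : Type} {F : (T -> Prop) -> Prop} {FF : Filter F}.

Lemma filterlim_Re (f : T -> C) (z : C) :
  filterlim f F (locally z) -> filterlim (fun s => Re (f s)) F (locally (Re z)).
Proof.
  intros Hf; eapply filterlim_comp; [exact Hf|].
  apply (linear_cont (K := R_AbsRing) (U := C_R_NormedModule) (V := R_NormedModule) Re).
  exact (is_linear_fst (U := R_NormedModule) (V := R_NormedModule)).
Qed.

Lemma filterlim_Im (f : T -> C) (z : C) :
  filterlim f F (locally z) -> filterlim (fun s => Im (f s)) F (locally (Im z)).
Proof.
  intros Hf; eapply filterlim_comp; [exact Hf|].
  apply (linear_cont (K := R_AbsRing) (U := C_R_NormedModule) (V := R_NormedModule) Im).
  exact (is_linear_snd (U := R_NormedModule) (V := R_NormedModule)).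
Qed.

Lemma filterlim_Rplus (f g : T -> R) (a b : R) :
  filterlim f F (locally a) -> filterlim g F (locally b) ->
  filterlim (fun s => f s + g s) F (locally (a + b)).
Proof.
  intros Hf Hg; apply (filterlim_comp_2 f g Rplus Hf Hg).
  exact (filterlim_plus (K := R_AbsRing) (V := R_NormedModule) a b).
Qed.

Lemma filterlim_Ropp (f : T -> R) (a : R) :
  filterlim f F (locally a) -> filterlim (fun s => - f s) F (locally (- a)).
Proof.
  intros Hf; eapply filterlim_comp; [exact Hf|].
  exact (filterlim_opp (K := R_AbsRing) (V := R_NormedModule) a).
Qed.

Lemma filterlim_Rminus (f g : T -> R) (a b : R) :
  filterlim f F (locally a) -> filterlim g F (locally b) ->
  filterlim (fun s => f s - g s) F (locally (a - b)).
Proof. intros Hf Hg; exact (filterlim_Rplus _ _ _ _ Hf (filterlim_Ropp _ _ Hg)). Qed.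

Lemma filterlim_Rsqr (f : T -> R) (a : R) :
  filterlim f F (locally a) -> filterlim (fun s => f s ^ 2) F (locally (a ^ 2)).
Proof.
  intros Hf; apply (filterlim_ext (fun s => f s * f s)); [intros; ring|].
  replace (a ^ 2) with (a * a) by ring.
  apply (filterlim_comp_2 f f Rmult Hf Hf).
  exact (filterlim_mult (K := R_AbsRing) a a).
Qed.

End Limits.

Lemma mean_value_lower_bound (f df : R -> R) (m s t : R) :
  (forall u, 0 < u -> is_derive f u (df u)) -> (forall u, 0 < u -> m <= df u) ->
  0 < s <= t -> f s + m * (t - s) <= f t.
Proof.
  intros Hd Hm Hst.
  destruct (MVT_gen f s t df) as [c [Hc Hmvt]];
    rewrite Rmin_left, Rmax_right in * by lra.
  - intros u Hu; apply Hd; lra.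
  - intros u Hu; apply continuity_pt_filterlim.
    apply (ex_derive_continuous (K := R_AbsRing) (V := R_NormedModule)).
    exists (df u); apply Hd; lra.
  - assert (m * (t - s) <= df c * (t - s)) by (apply Rmult_le_compat_r; [lra | apply Hm; lra]).
    lra.
Qed.

Lemma derive_lower_bound (f df : R -> R) (m : R) :
  (forall u, 0 < u -> is_derive f u (df u)) -> (forall u, 0 < u -> m <= df u) ->
  filterlim f (at_right 0) (locally (f 0)) ->
  forall t, 0 <= t -> f 0 + m * t <= f t.
Proof.
  intros Hd Hm Hc t Ht.
  destruct (Req_dec t 0) as [->|Ht0]; [lra|].
  assert (Hle : Rbar_le (f 0) (f t - m * (t - 0))).
  { apply (filterlim_le (F := at_right 0) f (fun s => f t - m * (t - s))).
    - assert (Htpos : 0 < t) by lra.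
      exists (mkposreal t Htpos); intros s Hs Hs0.
      assert (Hst : s < t).
      { unfold ball in Hs; simpl in Hs; unfold AbsRing_ball, abs, minus, plus, opp in Hs; simpl in Hs.
        apply Rabs_lt_between in Hs; lra. }
      pose proof (mean_value_lower_bound f df m s t Hd Hm (conj Hs0 (Rlt_le _ _ Hst))); lra.
    - exact Hc.
    - apply (filterlim_filter_le_1 (F := locally 0)); [apply filter_le_within|].
      apply (ex_derive_continuous (K := R_AbsRing) (V := R_NormedModule)).
      auto_derive; exact I. }
  simpl in Hle; lra.
Qed.

(* The right-hand side is the largest eigenvalue of [[0, a], [a, 2b]]; the bound is
   Cauchy-Schwarz for (a, b) against (2pq, q^2 - p^2), whose norm is p^2 + q^2. *)
Lemma quadratic_form_le (a b p q : R) :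
  2 * a * p * q + 2 * b * q ^ 2 <= (b + sqrt (a ^ 2 + b ^ 2)) * (p ^ 2 + q ^ 2).
Proof.
  set (S := sqrt (a ^ 2 + b ^ 2)).
  assert (HS : S * S = a ^ 2 + b ^ 2) by (apply sqrt_sqrt; nra).
  assert (HS0 : 0 <= S) by apply sqrt_pos.
  assert (Hcs : (2 * a * p * q + b * (q ^ 2 - p ^ 2)) ^ 2 <= (S * (p ^ 2 + q ^ 2)) ^ 2).
  { replace ((S * (p ^ 2 + q ^ 2)) ^ 2) with ((a ^ 2 + b ^ 2) * (p ^ 2 + q ^ 2) ^ 2)
      by (rewrite <- HS; ring).
    pose proof (pow2_ge_0 (a * (q ^ 2 - p ^ 2) - 2 * b * p * q)). nra. }
  assert (0 <= S * (p ^ 2 + q ^ 2)) by nra.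
  nra.
Qed.

Definition coherence_loss_rate (eps G : R) : R := 2 * G + sqrt (eps ^ 2 + (2 * G) ^ 2).

Lemma coherence_rate_lower_bound (x y z e1 e2 eps gm G : R) :
  x ^ 2 + y ^ 2 + z ^ 2 <= 1 -> e1 ^ 2 + e2 ^ 2 <= eps ^ 2 -> 0 <= eps -> 0 <= gm <= G ->
  - coherence_loss_rate eps G <= 2 * z * (e2 * x - e1 * y) - 4 * gm * (x ^ 2 + y ^ 2).
Proof.
  intros Hnorm He Heps Hgm.
  set (q := sqrt (x ^ 2 + y ^ 2)).
  assert (Hq : q ^ 2 = x ^ 2 + y ^ 2) by (apply pow2_sqrt; nra).
  assert (Hq0 : 0 <= q) by apply sqrt_pos.
  set (K := e2 * x - e1 * y).
  assert (HK : Rabs K <= eps * q).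
  { rewrite <- (Rabs_pos_eq (eps * q)) by nra; apply Rsqr_le_abs_0; unfold Rsqr.
    pose proof (pow2_ge_0 (e1 * x + e2 * y)). unfold K. nra. }
  assert (HzK : - (2 * Rabs z * Rabs K) <= 2 * z * K).
  { pose proof (Rle_abs (- (z * K))) as Habs.
    rewrite Rabs_Ropp, Rabs_mult in Habs; lra. }
  assert (Hz2 : Rabs z ^ 2 = z ^ 2) by (rewrite RPow_abs; apply Rabs_pos_eq, pow2_ge_0).
  pose proof (quadratic_form_le eps (2 * G) (Rabs z) q) as Hquad.
  pose proof (sqrt_pos (eps ^ 2 + (2 * G) ^ 2)).
  pose proof (Rabs_pos z).
  unfold coherence_loss_rate. nra.
Qed.

Lemma coherence_loss_rate_le_strong (eps G : R) :
  0 <= G -> eps ^ 2 <= 4 * G ^ 2 -> coherence_loss_rate eps G <= 4 * sqrt 2 * G.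
Proof.
  intros HG Hstrong.
  set (r2 := sqrt 2).
  assert (Hr2 : r2 * r2 = 2) by (apply sqrt_sqrt; lra).
  assert (Hr2_0 : 0 <= r2) by apply sqrt_pos.
  assert (Hsqrt : sqrt (eps ^ 2 + (2 * G) ^ 2) <= sqrt ((2 * r2 * G) ^ 2)).
  { apply sqrt_le_1_alt.
    replace ((2 * r2 * G) ^ 2) with (8 * G ^ 2)
      by (transitivity (4 * (r2 * r2) * G ^ 2); [rewrite Hr2; ring | ring]).
    nra. }
  rewrite sqrt_pow2 in Hsqrt by nra.
  unfold coherence_loss_rate. nra.
Qed.

Lemma coherence_loss_rate_le_weak (eps G : R) :
  4 * G ^ 2 < eps ^ 2 -> coherence_loss_rate eps G * sqrt (eps ^ 2 - 2 * G ^ 2) <= 2 * eps ^ 2.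
Proof.
  intros Hweak. unfold coherence_loss_rate.
  set (S := sqrt (eps ^ 2 + (2 * G) ^ 2)); set (Q := sqrt (eps ^ 2 - 2 * G ^ 2)).
  assert (HS : S ^ 2 = eps ^ 2 + (2 * G) ^ 2) by (apply pow2_sqrt; nra).
  assert (HQ : Q ^ 2 = eps ^ 2 - 2 * G ^ 2) by (apply pow2_sqrt; nra).
  pose proof (pow2_ge_0 (2 * G - Q)); pose proof (pow2_ge_0 (S - 2 * Q)).
  nra.
Qed.

Lemma coherence_loss_rate_mul_Tp (Cbar eps g0 g : R) :
  Cbar <= 1 -> 0 < eps -> 0 <= g0 + g ->
  coherence_loss_rate eps (g0 + g) * Tp Cbar eps g0 g <= 1 - Cbar.
Proof.
  intros HC Heps HG. unfold Tp.
  set (rate := coherence_loss_rate eps (g0 + g)).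
  destruct (Rle_dec (eps ^ 2) (4 * (g0 + g) ^ 2)) as [Hstrong|Hweak].
  - assert (Hsqrt2 : 0 < sqrt 2) by (apply sqrt_lt_R0; lra).
    assert (HGpos : 0 < g0 + g) by (assert (0 < eps ^ 2) by (apply pow_lt; lra); nra).
    pose proof (coherence_loss_rate_le_strong eps (g0 + g) HG Hstrong) as Hrate; fold rate in Hrate.
    replace (rate * ((1 - Cbar) / (4 * sqrt 2 * (g0 + g))))
      with ((1 - Cbar) * rate / (4 * sqrt 2 * (g0 + g))) by (field; split; lra).
    apply Rle_div_l; [nra|]. apply Rmult_le_compat_l; lra.
  - apply Rnot_le_lt in Hweak.
    pose proof (coherence_loss_rate_le_weak eps (g0 + g) Hweak) as Hrate; fold rate in Hrate.
    replace (rate * ((1 - Cbar) * sqrt (eps ^ 2 - 2 * (g0 + g) ^ 2) / (2 * eps ^ 2)))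
      with ((1 - Cbar) * (rate * sqrt (eps ^ 2 - 2 * (g0 + g) ^ 2)) / (2 * eps ^ 2))
      by (field; lra).
    apply Rle_div_l; [nra|]. apply Rmult_le_compat_l; lra.
Qed.

Definition bz (rho : M2) : R := Re (mtr (mmul rho sigma_z)).

Definition mixedness (rho : M2) : R := 1 - (coherence rho + bz rho ^ 2).

Lemma bx_entries (r : M2) : bx r = Re (r false true) + Re (r true false).
Proof.
  unfold bx, mtr, mmul, sigma_x.
  destruct (r false false), (r false true), (r true false), (r true true); simpl; ring.
Qed.

Lemma by_entries (r : M2) : by_ r = Im (r true false) - Im (r false true).
Proof.
  unfold by_, mtr, mmul, sigma_y, Ci.
  destruct (r false false), (r false true), (r true false), (r true true); simpl; ring.
Qed.

Lemma bz_entries (r : M2) : bz r = Re (r false false) - Re (r true true).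
Proof.
  unfold bz, mtr, mmul, sigma_z.
  destruct (r false false), (r false true), (r true false), (r true true); simpl; ring.
Qed.

(* Positivity tested on (-rho01, rho00) and (rho11, -rho10) gives rho00 det rho >= 0 and
   rho11 det rho >= 0, hence det rho >= 0 as tr rho = 1; and mixedness = 4 det rho. *)
Lemma mixedness_ge0 (r : M2) : is_density r -> 0 <= mixedness r.
Proof.
  intros [Hherm [Hpos Htr]].
  pose proof (Hpos (fun i => if i then r false false else Copp (r false true))) as Q1.
  pose proof (Hpos (fun i => if i then Copp (r true false) else r true true)) as Q2.
  pose proof (Hherm false false) as H00. pose proof (Hherm true true) as H11.
  unfold mixedness, coherence; rewrite bx_entries, by_entries, bz_entries.
  simpl in Q1, Q2; unfold mtr in Htr.
  rewrite (Hherm false true) in Q1, Q2 |- *.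
  destruct (r false false) as [a1 a2], (r false true) as [b1 b2], (r true true) as [d1 d2].
  unfold Cconj in *; simpl in *.
  apply (f_equal snd) in H00; apply (f_equal snd) in H11; apply (f_equal fst) in Htr.
  unfold Cplus in Htr; simpl in H00, H11, Htr.
  assert (a2 = 0) by lra; assert (d2 = 0) by lra; subst a2 d2.
  assert (a1 * (a1 * d1 - b1 * b1 - b2 * b2) >= 0) by nra.
  assert (d1 * (a1 * d1 - b1 * b1 - b2 * b2) >= 0) by nra.
  nra.
Qed.

Section BlochEquations.
Variables (w ex ey : R -> R) (t g : R) (r : M2).

Lemma bx_lindblad :
  bx (lindblad_rhs (Ham w ex ey t) g r) = ey t * bz r - (1 + w t) * by_ r - 2 * g * bx r.
Proof.
  rewrite !bx_entries, by_entries, bz_entries.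
  unfold lindblad_rhs, Ham, comm, madd, msub, mmul, mscal, Ix, Iy, Iz, sigma_x, sigma_y, sigma_z, Ci.
  destruct (r false false), (r false true), (r true false), (r true true); simpl; field.
Qed.

Lemma by_lindblad :
  by_ (lindblad_rhs (Ham w ex ey t) g r) = (1 + w t) * bx r - ex t * bz r - 2 * g * by_ r.
Proof.
  rewrite !by_entries, bx_entries, bz_entries.
  unfold lindblad_rhs, Ham, comm, madd, msub, mmul, mscal, Ix, Iy, Iz, sigma_x, sigma_y, sigma_z, Ci.
  destruct (r false false), (r false true), (r true false), (r true true); simpl; field.
Qed.

Lemma bz_lindblad :
  bz (lindblad_rhs (Ham w ex ey t) g r) = ex t * by_ r - ey t * bx r.
Proof.
  rewrite !bz_entries, bx_entries, by_entries.
  unfold lindblad_rhs, Ham, comm, madd, msub, mmul, mscal, Ix, Iy, Iz, sigma_x, sigma_y, sigma_z, Ci.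
  destruct (r false false), (r false true), (r true false), (r true true); simpl; field.
Qed.

End BlochEquations.

Section BlochCoordinatesAlongCurves.
Variable r : R -> M2.

Lemma is_derive_bx (t : R) (D : M2) :
  (forall i j, is_derive (fun s => r s i j) t (D i j)) ->
  is_derive (fun s => bx (r s)) t (bx D).
Proof.
  intros Hr; rewrite bx_entries.
  apply (is_derive_ext (fun s => Re (r s false true) + Re (r s true false))).
  { intros s; symmetry; apply bx_entries. }
  apply (is_derive_plus (K := R_AbsRing) (V := R_NormedModule)); apply is_derive_Re, Hr.
Qed.

Lemma is_derive_by (t : R) (D : M2) :
  (forall i j, is_derive (fun s => r s i j) t (D i j)) ->
  is_derive (fun s => by_ (r s)) t (by_ D).
Proof.
  intros Hr; rewrite by_entries.
  apply (is_derive_ext (fun s => Im (r s true false) - Im (r s false true))).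
  { intros s; symmetry; apply by_entries. }
  apply (is_derive_minus (K := R_AbsRing) (V := R_NormedModule)); apply is_derive_Im, Hr.
Qed.

Lemma is_derive_bz (t : R) (D : M2) :
  (forall i j, is_derive (fun s => r s i j) t (D i j)) ->
  is_derive (fun s => bz (r s)) t (bz D).
Proof.
  intros Hr; rewrite bz_entries.
  apply (is_derive_ext (fun s => Re (r s false false) - Re (r s true true))).
  { intros s; symmetry; apply bz_entries. }
  apply (is_derive_minus (K := R_AbsRing) (V := R_NormedModule)); apply is_derive_Re, Hr.
Qed.

Context {F : (R -> Prop) -> Prop} {FF : Filter F} (r0 : M2).
Hypothesis r_lim : forall i j, filterlim (fun s => r s i j) F (locally (r0 i j)).

Lemma filterlim_bx : filterlim (fun s => bx (r s)) F (locally (bx r0)).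
Proof.
  rewrite bx_entries; apply (filterlim_ext (fun s => Re (r s false true) + Re (r s true false))).
  { intros s; symmetry; apply bx_entries. }
  apply filterlim_Rplus; apply filterlim_Re, r_lim.
Qed.

Lemma filterlim_by : filterlim (fun s => by_ (r s)) F (locally (by_ r0)).
Proof.
  rewrite by_entries; apply (filterlim_ext (fun s => Im (r s true false) - Im (r s false true))).
  { intros s; symmetry; apply by_entries. }
  apply filterlim_Rminus; apply filterlim_Im, r_lim.
Qed.

Lemma filterlim_bz : filterlim (fun s => bz (r s)) F (locally (bz r0)).
Proof.
  rewrite bz_entries; apply (filterlim_ext (fun s => Re (r s false false) - Re (r s true true))).
  { intros s; symmetry; apply bz_entries. }
  apply filterlim_Rminus; apply filterlim_Re, r_lim.
Qed.

Lemma filterlim_coherence : filterlim (fun s => coherence (r s)) F (locally (coherence r0)).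
Proof. apply filterlim_Rplus; apply filterlim_Rsqr; [exact filterlim_bx | exact filterlim_by]. Qed.

Lemma filterlim_mixedness : filterlim (fun s => mixedness (r s)) F (locally (mixedness r0)).
Proof.
  apply filterlim_Rminus; [apply filterlim_const|].
  apply filterlim_Rplus; [exact filterlim_coherence | apply filterlim_Rsqr, filterlim_bz].
Qed.

End BlochCoordinatesAlongCurves.

Section Trajectory.
Variables (w ex ey gam : R -> R) (rho : R -> M2).
Hypothesis rho_derive : forall t, 0 < t -> forall i j,
  is_derive (fun s => rho s i j) t (lindblad_rhs (Ham w ex ey t) (gam t) (rho t) i j).
Hypothesis rho_right_cont : forall i j,
  filterlim (fun s => rho s i j) (at_right 0) (locally (rho 0 i j)).

Lemma is_derive_coherence_traj (t : R) : 0 < t ->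
  is_derive (fun s => coherence (rho s)) t
    (2 * bz (rho t) * (ey t * bx (rho t) - ex t * by_ (rho t)) - 4 * gam t * coherence (rho t)).
Proof.
  intros Ht.
  replace (2 * bz (rho t) * (ey t * bx (rho t) - ex t * by_ (rho t)) - 4 * gam t * coherence (rho t))
    with (2 * bx (rho t) * bx (lindblad_rhs (Ham w ex ey t) (gam t) (rho t))
          + 2 * by_ (rho t) * by_ (lindblad_rhs (Ham w ex ey t) (gam t) (rho t)))
    by (rewrite bx_lindblad, by_lindblad; unfold coherence; ring).
  apply (is_derive_plus (K := R_AbsRing) (V := R_NormedModule)); apply is_derive_sqr.
  - exact (is_derive_bx rho t _ (rho_derive t Ht)).
  - exact (is_derive_by rho t _ (rho_derive t Ht)).
Qed.

Lemma is_derive_mixedness_traj (t : R) : 0 < t ->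
  is_derive (fun s => mixedness (rho s)) t (4 * gam t * coherence (rho t)).
Proof.
  intros Ht.
  replace (4 * gam t * coherence (rho t))
    with (0 - ((2 * bz (rho t) * (ey t * bx (rho t) - ex t * by_ (rho t))
                - 4 * gam t * coherence (rho t))
               + 2 * bz (rho t) * bz (lindblad_rhs (Ham w ex ey t) (gam t) (rho t))))
    by (rewrite bz_lindblad; ring).
  apply (is_derive_minus (K := R_AbsRing) (V := R_NormedModule)).
  { exact (is_derive_const (K := R_AbsRing) (V := R_NormedModule) 1 t). }
  apply (is_derive_plus (K := R_AbsRing) (V := R_NormedModule)).
  - exact (is_derive_coherence_traj t Ht).
  - exact (is_derive_sqr _ t _ (is_derive_bz rho t _ (rho_derive t Ht))).
Qed.

Hypothesis gam_nonneg : forall t, 0 < t -> 0 <= gam t.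
Hypothesis rho0_density : is_density (rho 0).

Lemma mixedness_traj_ge0 (t : R) : 0 <= t -> 0 <= mixedness (rho t).
Proof.
  intros Ht.
  pose proof (mixedness_ge0 _ rho0_density).
  assert (Hmono : mixedness (rho 0) + 0 * t <= mixedness (rho t)).
  { apply (derive_lower_bound _ _ 0 is_derive_mixedness_traj); [| | exact Ht].
    - intros u Hu; pose proof (gam_nonneg u Hu).
      assert (0 <= coherence (rho u)) by (unfold coherence; nra). nra.
    - exact (filterlim_mixedness rho (rho 0) rho_right_cont). }
  lra.
Qed.

Lemma coherence_traj_lower_bound (eps G : R) :
  0 <= eps -> (forall t, 0 < t -> gam t <= G) ->
  (forall t, 0 < t -> ex t ^ 2 + ey t ^ 2 <= eps ^ 2) ->
  forall t, 0 <= t -> coherence (rho 0) - coherence_loss_rate eps G * t <= coherence (rho t).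
Proof.
  intros Heps HG He t Ht.
  replace (coherence (rho 0) - coherence_loss_rate eps G * t)
    with (coherence (rho 0) + - coherence_loss_rate eps G * t) by ring.
  apply (derive_lower_bound _ _ _ is_derive_coherence_traj); [| | exact Ht].
  - intros u Hu.
    pose proof (mixedness_traj_ge0 u (Rlt_le _ _ Hu)) as Hmix.
    unfold mixedness, coherence in *.
    apply coherence_rate_lower_bound; [lra | apply He, Hu | exact Heps |].
    split; [apply gam_nonneg | apply HG]; exact Hu.
  - exact (filterlim_coherence rho (rho 0) rho_right_cont).
Qed.

End Trajectory.

Theorem theorem4
  (Cbar eps om g0 g : R)
  (w ex ey dg : R -> R) (rho : R -> M2)
  (HC0 : 0 < Cbar) (HC1 : Cbar <= 1) (Heps : 0 < eps) (Hom : 0 <= om)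
  (Hg : 0 <= g) (Hgg0 : g <= g0)
  (Hw : forall t, 0 <= t -> Rabs (w t) <= om)
  (He : forall t, 0 <= t -> sqrt ((ex t) ^ 2 + (ey t) ^ 2) <= eps)
  (Hdg : forall t, 0 <= t -> Rabs (dg t) <= g)
  (Hode : forall t, 0 < t -> forall i j,
      is_derive (fun s => rho s i j) t
        (lindblad_rhs (Ham w ex ey t) (g0 + dg t) (rho t) i j))
  (Hcont0 : forall i j,
      filterlim (fun s => rho s i j) (at_right 0) (locally (rho 0 i j)))
  (Hrho0 : is_density (rho 0))
  (HCoh0 : coherence (rho 0) = 1) :
  forall t, 0 <= t <= Tp Cbar eps g0 g -> in_Dp Cbar (rho t).
Proof.
  intros t [Ht0 HtT].
  assert (Hgam : forall s, 0 < s -> 0 <= g0 + dg s <= g0 + g).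
  { intros s Hs; pose proof (proj1 (Rabs_le_between _ _) (Hdg s (Rlt_le _ _ Hs))); lra. }
  assert (Hfield : forall s, 0 < s -> ex s ^ 2 + ey s ^ 2 <= eps ^ 2).
  { intros s Hs; pose proof (He s (Rlt_le _ _ Hs)) as Hsq.
    rewrite <- (pow2_sqrt (ex s ^ 2 + ey s ^ 2)) by nra.
    apply pow_incr; split; [apply sqrt_pos | exact Hsq]. }
  pose proof (coherence_traj_lower_bound w ex ey (fun s => g0 + dg s) rho Hode Hcont0
                (fun s Hs => proj1 (Hgam s Hs)) Hrho0 eps (g0 + g) (Rlt_le _ _ Heps)
                (fun s Hs => proj2 (Hgam s Hs)) Hfield t Ht0) as Hlower.
  pose proof (coherence_loss_rate_mul_Tp Cbar eps g0 g HC1 Heps ltac:(lra)) as HTp.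
  assert (0 <= coherence_loss_rate eps (g0 + g)).
  { unfold coherence_loss_rate; pose proof (sqrt_pos (eps ^ 2 + (2 * (g0 + g)) ^ 2)); lra. }
  unfold in_Dp; nra.
Qed.
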